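(* Let $A=(A,\oplus,\odot)$ be a finite skew brace such that the derived subgroup $A_{\oplus}^{\prime}$ of its additive group $A_{\oplus}=(A,\oplus)$ is cyclic. Then the multiplicative group $A_{\odot}=(A,\odot)$ is solvable.
   Context: A skew brace is a set $A$ with two binary operations $\oplus,\odot$ such that $A_{\oplus}=(A,\oplus)$ and $A_{\odot}=(A,\odot)$ are groups and $a\odot(b\oplus c)=(a\odot b)\ominus a\oplus(a\odot c)$ for all $a,b,c\in A$, where $\ominus a$ denotes the inverse of $a$ in $A_{\oplus}$. *)

From mathcomp Require Import all_boot all_fingroup all_solvable.
Set Implicit Arguments. Unset Strict Implicit. Unset Printing Implicit Defensive.
Local Open Scope group_scope.

(* A finite skew brace (A, (+), (.)) is encoded by two finite groups on
   isomorphic carriers: gT carries the additive group A_(+) (its group law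
   "*" is (+), its inverse "^-1" is the additive inverse), hT carries the
   multiplicative group A_(.), and f : gT -> hT, finv : hT -> gT are mutually
   inverse bijections identifying the two carriers (the identity map of A). *)
Definition brace_mul (gT hT : finGroupType) (f : gT -> hT) (finv : hT -> gT)
  (a b : gT) : gT := finv (f a * f b).

Definition is_skew_brace (gT hT : finGroupType) (f : gT -> hT) (finv : hT -> gT) :
  Prop :=
  [/\ cancel f finv, cancel finv f &
      forall a b c : gT,
        brace_mul f finv a (b * c) =
        brace_mul f finv a b * a^-1 * brace_mul f finv a c].

From mathcomp Require Import all_boot all_fingroup all_solvable.
From mathcomp Require integral_char.
Set Implicit Arguments. Unset Strict Implicit. Unset Printing Implicit Defensive.
Local Open Scope group_scope.

(* For a in A, lambda_a(b) = a^-1 (a . b) is an automorphism of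
   A_(+); it stabilises the cyclic subgroup C = A_(+)', on which it acts as a
   power map, and comparing it with conjugation shows that b^-1 lambda_a(b)
   centralises C. Hence Z = C_A(C) is closed under (.), its additive group is
   nilpotent of class at most 2, and u |-> uZ is a homomorphism from A_(.) onto
   the abelian group A_(+)/Z, with kernel Z. It remains to see that a skew brace
   with nilpotent additive group has a solvable multiplicative group: for each
   prime t the Hall t'-subgroup of the additive group is characteristic, hence
   closed under (.), and by induction it yields a solvable subgroup of t-power
   index in the multiplicative group; the p^a q^b theorem of Burnside and
   Wielandt's theorem (three solvable subgroups of pairwise coprime indices
   force solvability) conclude. *)

Lemma coprime_pnat_neq (p q m n : nat) :
  p != q -> p.-nat m -> q.-nat n -> coprime m n.
Proof.
by move=> neq_pq; apply: sub_pnat_coprime => r; rewrite !inE => /eqP->; rewrite eq_sym.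
Qed.

Lemma solvable_core_of_coprime_supplement (gT : finGroupType)
    (G H K A : {group gT}) (p : nat) :
    H \subset G -> K \subset G -> solvable K -> coprime #|G : H| #|G : K| ->
    p^'.-nat #|G : K| -> p.-group A -> A :!=: 1 -> A \subset H -> H \subset 'N(A) ->
  exists M : {group gT}, [/\ M <| G, M :!=: 1 & solvable M].
Proof.
move=> sHG sKG solK coHK p'K pA ntA sAH nAH.
have [P sylP] := Sylow_exists p K.
have sylPG : p.-Sylow(G) P.
  have /and3P[sPK pP p'P] := sylP.
  by rewrite /pHall pP (subset_trans sPK sKG) -(Lagrange_index sKG sPK) pnatM p'K p'P.
have [x Gx sAPx] := Sylow_subJ sylPG (subset_trans sAH sHG) pA.
have sKxG : K :^ x \subset G by rewrite -(conjGid Gx) conjSg.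
(* G = K^x H, so the G-conjugates of K^x are its H-conjugates, which all
   contain A^h = A. *)
have GeKxH : K :^ x * H = G.
  by apply: coprime_index_mulG; rewrite // coprime_sym -{2}(conjGid Gx) indexJg.
exists (gcore (K :^ x) G)%G; split; first exact: gcore_normal.
- apply: contra ntA => /eqP core1; rewrite -subG1 -core1.
  apply/bigcapsP => y; rewrite -GeKxH => /mulsgP[k h Kk Hh ->].
  rewrite conjsgM (conjGid Kk) -(normP (subsetP nAH h Hh)) conjSg.
  by apply: subset_trans sAPx _; rewrite conjSg (pHall_sub sylP).
- by apply: solvableS (gcore_sub _ _) _; rewrite -(isog_sol (conj_isog K x)).
Qed.

Theorem Wielandt_solvable (gT : finGroupType) (G H1 H2 H3 : {group gT}) :
    H1 \subset G -> H2 \subset G -> H3 \subset G ->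
    solvable H1 -> solvable H2 -> solvable H3 ->
    coprime #|G : H1| #|G : H2| -> coprime #|G : H1| #|G : H3| ->
    coprime #|G : H2| #|G : H3| ->
  solvable G.
Proof.
move: {2}_.+1 (ltnSn #|G|) => n; elim: n => // n IHn in gT G H1 H2 H3 *.
move=> ltGn sH1G sH2G sH3G sol1 sol2 sol3 co12 co13 co23.
have [H1e | ntH1] := eqVneq H1 1%G.
  move: co12; rewrite H1e indexg1 => /eqP co12.
  have /eqP : #|G : H2| = 1%N by rewrite -co12 (gcdn_idPr _) ?dvdn_indexg.
  by rewrite indexg_eq1 => sGH2; apply: solvableS sGH2 sol2.
have [A [sAH1 /normal_norm nAH1 ntA /is_abelemP[p p_pr /abelem_pgroup pA]]] :=
  solvable_norm_abelem sol1 (normal_refl H1) ntH1.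
have [K [sKG solK co1K p'K]] : exists K : {group gT},
    [/\ K \subset G, solvable K, coprime #|G : H1| #|G : K| & p^'.-nat #|G : K|].
  have [pH2 | p'H2] := boolP (p %| #|G : H2|); last by exists H2; rewrite p'natE.
  exists H3; split; rewrite // p'natE //; apply: contraTN co23 => pH3.
  apply/negP => /(coprime_dvdl pH2)/(coprime_dvdr pH3).
  by rewrite /coprime gcdnn gtn_eqF ?prime_gt1.
have [M [nsMG ntM solM]] :=
  solvable_core_of_coprime_supplement sH1G sKG solK co1K p'K pA ntA sAH1 nAH1.
rewrite (series_sol nsMG) solM /=.
have dvd_index (H : {group gT}) : #|G / M : H / M| %| #|G : H|.
  by apply: index_quotient; rewrite subIset ?(normal_norm nsMG).
have co_quo (H H' : {group gT}) : coprime #|G : H| #|G : H'| ->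
    coprime #|G / M : H / M| #|G / M : H' / M|.
  by move=> coHH'; rewrite (coprime_dvdl (dvd_index H)) ?(coprime_dvdr (dvd_index H')).
apply: (IHn _ _ (H1 / M)%G (H2 / M)%G (H3 / M)%G);
  rewrite ?quotientS ?quotient_sol ?co_quo //.
by rewrite -ltnS (leq_trans _ ltGn) // ltnS ltn_quotient // normal_sub.
Qed.

Lemma solvable_pnat_index_subgroups (gT : finGroupType) (G : {group gT}) :
    (forall p, p \in primes #|G| ->
       exists H : {group gT}, [/\ H \subset G, solvable H & p.-nat #|G : H|]) ->
  solvable G.
Proof.
move=> solHp; have [le2 | gt2] := leqP (size (primes #|G|)) 2.
  exact: integral_char.Burnside_p_a_q_b.
have := sorted_primes #|G|; move: gt2 solHp.
case: (primes #|G|) => [|p [|q [|r s]]] //= _ solHp /and3P[ltpq ltqr _].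
have /solHp[H1 [sH1G sol1 pH1]] : p \in [:: p, q, r & s] by rewrite inE eqxx.
have /solHp[H2 [sH2G sol2 qH2]] : q \in [:: p, q, r & s] by rewrite !inE eqxx orbT.
have /solHp[H3 [sH3G sol3 rH3]] : r \in [:: p, q, r & s] by rewrite !inE eqxx !orbT.
apply: (Wielandt_solvable sH1G sH2G sH3G sol1 sol2 sol3).
- by apply: coprime_pnat_neq pH1 qH2; rewrite ltn_eqF.
- by apply: coprime_pnat_neq pH1 rH3; rewrite ltn_eqF ?(ltn_trans ltpq).
- by apply: coprime_pnat_neq qH2 rH3; rewrite ltn_eqF.
Qed.

Section CyclicNormalSubgroup.
Variable gT : finGroupType.
Implicit Types G C D : {group gT}.

Lemma cyclic_morph_expg D C (phi : {morphism D >-> gT}) :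
  C \subset D -> cyclic C -> phi @* C \subset C ->
  exists k, {in C, forall u, phi u = u ^+ k}.
Proof.
move=> sCD /cyclicP[g defC] sphiC.
have Dg : g \in D by rewrite (subsetP sCD) // defC cycle_id.
have /cycleP[k phig] : phi g \in <[g]>.
  by rewrite -defC (subsetP sphiC) // mem_morphim // defC cycle_id.
by exists k; rewrite defC => _ /cycleP[m ->]; rewrite morphX // phig -!expgM mulnC.
Qed.

Lemma cyclic_normal_morph_cent G C (phi : {morphism G >-> gT}) :
  cyclic C -> C <| G -> phi @* C = C -> {in G, forall a, a^-1 * phi a \in 'C(C)}.
Proof.
move=> cycC nsCG imC a Ga; have [sCG nCG] := andP nsCG.
have [k phiE] : exists k, {in C, forall u, phi u = u ^+ k}.
  by apply: cyclic_morph_expg; rewrite ?imC.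
apply/centP => c Cc; apply/commute_sym/commgP/conjg_fixP.
have: c ^ a^-1 \in phi @* C by rewrite imC memJ_norm ?groupV ?(subsetP nCG).
(* phi (d ^ a) is both (phi d) ^ (phi a) and (d ^ a) ^+ k = (phi d) ^ a. *)
case/morphimP=> d _ Cd def_d; have Gd := subsetP sCG d Cd.
rewrite conjgM def_d -morphJ // phiE ?memJ_norm ?(subsetP nCG) //.
by rewrite -conjXg -phiE // -def_d conjgKV.
Qed.

Lemma nilpotent_cent_der1 G : abelian G^`(1) -> nilpotent 'C_G(G^`(1)).
Proof.
move=> abG'; set Z := 'C_G(_); apply: small_nil_class.
apply: (@leq_trans 2) => //; rewrite nil_class2.
have sG'Z : G^`(1) \subset Z by rewrite subsetI der_sub.
apply: subset_trans (dergS 1 (subsetIl G _)) _.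
by rewrite subsetI sG'Z centsC subsetIr.
Qed.

End CyclicNormalSubgroup.

Section SkewBrace.
Variables (gT hT : finGroupType) (f : gT -> hT) (finv : hT -> gT).
Hypothesis brace : is_skew_brace f finv.

Let fK : cancel f finv. Proof. by case: brace. Qed.
Let finvK : cancel finv f. Proof. by case: brace. Qed.

Local Notation "a \o* b" := (brace_mul f finv a b) (at level 40).

Let brace_mulDr a b c : a \o* (b * c) = a \o* b * a^-1 * (a \o* c).
Proof. by case: brace. Qed.

Lemma f_brace_mul a b : f (a \o* b) = f a * f b.
Proof. exact: finvK. Qed.

Lemma brace_mulg1 a : a \o* 1 = a.
Proof.
have := brace_mulDr a 1 1; rewrite mulg1 -mulgA -{1}[a \o* 1]mulg1 => /mulgI.
by move/esym/(canRL (mulKVg a)); rewrite mulg1.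
Qed.

Lemma f1 : f 1 = 1.
Proof. by apply: (mulgI (f 1)); rewrite -f_brace_mul brace_mulg1 mulg1. Qed.

Definition lambda a x := a^-1 * (a \o* x).

Lemma brace_mulE a x : a \o* x = a * lambda a x.
Proof. by rewrite mulKVg. Qed.

Lemma lambdaM a : {morph lambda a : x y / x * y}.
Proof. by move=> x y; rewrite /lambda brace_mulDr !mulgA. Qed.

Canonical lambda_morphism a :=
  @Morphism _ _ [set: gT] (lambda a) (in2W (lambdaM a)).

Lemma injm_lambda a : 'injm (lambda_morphism a).
Proof.
apply/injmP=> x y _ _ /mulgI /(congr1 f).
by rewrite !f_brace_mul => /mulgI /(can_inj fK).
Qed.

Lemma im_lambda a : lambda_morphism a @* [set: gT] = [set: gT].
Proof. by apply/eqP; rewrite eqEcard subsetT card_injm ?injm_lambda ?leqnn. Qed.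

Definition brace_closed (S : {set gT}) := {in S &, forall a b, a \o* b \in S}.

Lemma brace_closed_group_set (S : {group gT}) :
  brace_closed S -> group_set (f @: S).
Proof.
move=> cS; apply/group_setP; split; first by apply/imsetP; exists 1; rewrite ?f1.
move=> _ _ /imsetP[a Sa ->] /imsetP[b Sb ->].
by apply/imsetP; exists (a \o* b); rewrite ?f_brace_mul ?cS.
Qed.

Lemma char_brace_closed (S H : {group gT}) :
  brace_closed S -> H \char S -> brace_closed H.
Proof.
move=> cS chHS a b Ha Hb; have sHS := char_sub chHS; have Sa := subsetP sHS a Ha.
pose la := restrm (subsetT S) (lambda_morphism a).
have injla : 'injm la by rewrite injm_restrm ?injm_lambda.
have laS : la @* S = S.
  apply/eqP; rewrite eqEcard card_injm // leqnn andbT.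
  apply/subsetP=> _ /morphimP[x _ Sx ->].
  by rewrite /= /lambda groupM ?groupV ?cS.
have [_ /(_ la injla laS) laH] := charP _ _ chHS.
rewrite brace_mulE groupM // -laH; exact: (mem_morphim la) (subsetP sHS b Hb) Hb.
Qed.

Lemma nilpotent_brace_closed_sol (S : {group gT}) :
  brace_closed S -> nilpotent S -> solvable (f @: S).
Proof.
elim: {S}_.+1 {-2}S (ltnSn #|S|) => // n IHn S leSn cS nilS.
have card_f (A : {set gT}) : #|f @: A| = #|A| := card_imset A (can_inj fK).
have sTS t : 'O_t^'(S) \subset S := pcore_sub _ _.
pose fS := Group (brace_closed_group_set cS); change (solvable fS).
apply: solvable_pnat_index_subgroups => t; rewrite card_f => t_S.
have cT := char_brace_closed cS (pcore_char t^' S).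
exists (Group (brace_closed_group_set cT)); split.
- by rewrite /= imsetS.
- apply: IHn cT (nilpotentS (sTS t) nilS); rewrite -ltnS (leq_trans _ leSn) // ltnS.
  rewrite proper_card // properEneq sTS andbT; apply: contraTneq t_S => defT.
  have /pnatPpi t'S := pcore_pgroup t^' S; rewrite defT in t'S.
  by apply/negP => /t'S; rewrite !inE eqxx.
- rewrite -divgS ?imsetS //= !card_f (divgS (sTS t)).
  by have /and3P[_ _] := nilpotent_pcore_Hall t^' nilS; rewrite pnatNK.
Qed.

Section CyclicDerivedSubgroup.
Hypothesis cycT' : cyclic [set: gT]^`(1).

Local Notation Z := 'C([set: gT]^`(1)).

Let normZ x : x \in 'N(Z).
Proof.
by rewrite (subsetP (norms_cent (normal_norm (der_normal 1 [set: gT]%G)))) ?inE.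
Qed.

Lemma lambda_cent_der1 a b : b^-1 * lambda a b \in Z.
Proof.
apply: (cyclic_normal_morph_cent (phi := lambda_morphism a)); rewrite ?inE //.
  exact: der_normal.
by rewrite morphim_der // im_lambda.
Qed.

Lemma cent_der1_brace_closed : brace_closed Z.
Proof.
move=> a b Za Zb; rewrite brace_mulE -(mulKVg b (lambda a b)) mulgA.
exact: groupM (groupM Za Zb) (lambda_cent_der1 a b).
Qed.

Lemma nilpotent_cent_der1T : nilpotent Z.
Proof. by have := nilpotent_cent_der1 (cyclic_abelian cycT'); rewrite setTI. Qed.

Definition brace_coset u := coset Z (finv u).

Lemma brace_cosetM : {in [set: hT] &, {morph brace_coset : u v / u * v}}.
Proof.
move=> u v _ _; rewrite /brace_coset.
have -> : finv (u * v) = finv u \o* finv v by rewrite /brace_mul !finvK.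
rewrite brace_mulE -(mulKVg (finv v) (lambda _ _)) mulgA.
by rewrite coset_kerr ?lambda_cent_der1 ?normZ // morphM ?normZ.
Qed.

Canonical brace_coset_morphism := Morphism brace_cosetM.

Lemma ker_brace_coset : 'ker brace_coset_morphism = f @: Z.
Proof.
apply/setP=> u; apply/idP/imsetP=> [/mker/coset_idr Zu | [x Zx ->]].
  by exists (finv u); rewrite ?Zu.
by apply/kerP; rewrite ?inE // /= /brace_coset fK coset_id.
Qed.

Lemma abelian_im_brace_coset : abelian (brace_coset_morphism @* [set: hT]).
Proof.
apply: abelianS (sub_der1_abelian (cyclic_abelian cycT')).
by apply/subsetP=> _ /morphimP[u _ _ ->]; rewrite mem_quotient ?inE.
Qed.

End CyclicDerivedSubgroup.

End SkewBrace.

Theorem theorem5p2 (gT hT : finGroupType) (f : gT -> hT) (finv : hT -> gT) :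
  is_skew_brace f finv ->
  cyclic ([set: gT]^`(1)) ->
  solvable [set: hT].
Proof.
move=> brace cycT'; set phi := brace_coset_morphism brace cycT'.
rewrite (series_sol (ker_normal phi)) (isog_sol (first_isog phi)).
rewrite (abelian_sol (abelian_im_brace_coset brace cycT')) andbT /= ker_brace_coset.
exact: nilpotent_brace_closed_sol
  (cent_der1_brace_closed brace cycT') (nilpotent_cent_der1T cycT').
Qed.
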